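(* Let $\Lambda_n=\bigcup_{P\in\wp_n}P$ be the $n$-th stage of the construction, so $\Lambda=\bigcap_{n\ge1}\Lambda_n$. Then for every $\rho>0$, $$\mathcal N(\Lambda,\rho)=\inf_{n>0}\mathcal N(\Lambda_n,\rho).$$ Moreover, there exists $N_1>0$ such that $\mathcal N(\Lambda,\rho)=\mathcal N(\Lambda_n,\rho)$ for every $n>N_1$.
   Context: Let $M$ be a smooth $d$-dimensional Riemannian manifold, $N\subset M$ a compact domain with nonempty interior and piecewise smooth boundary, $U\supset N$ open. Let $g_1,\dots,g_s$ be injective $C^r$ maps ($r>1$) from $U$ into $N$ with $\|Dg\|:=\max_i\sup_x\|Dg_i(x)\|<1$, such that $g_i(U)$ are pairwise disjoint subsets of the interior of $N$ and $\partial g_i(N)\cap\partial N=\emptyset$; $\Lambda=\bigcap_{n\ge1}\bigcup_{(i_1,\dots,i_n)}g_{i_1}\circ\cdots\circ g_{i_n}(N)$, assumed volume irreducible. $\wp_n=\{g_{i_1}\circ\cdots\circ g_{i_n}(N)\}$ are the atoms of generation $n$. For a compact set $X$ and $\rho>0$, $\mathcal N(X,\rho)$ is the minimal cardinality of a finite covering of $X$ by open balls of radius $\rho$. *)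

From HB Require Import structures.
From mathcomp Require Import all_boot all_order all_algebra.
From mathcomp Require Import all_classical all_reals all_analysis.
Set Implicit Arguments. Unset Strict Implicit. Unset Printing Implicit Defensive.
Import Order.TTheory GRing.Theory Num.Theory.
Local Open Scope classical_set_scope.
Local Open Scope ring_scope.

Section Defs.
Context {R : realType} {M : metricType R}.

Definition ball_cover (X : set M) (rho : R) (k : nat) : Prop :=
  exists c : seq M, size c = k /\ X `<=` \bigcup_(x in [set x | x \in c]) ball x rho.

(** N(X, rho): minimal cardinality of a finite covering of X by open balls
    of radius rho (0 by convention if no finite covering exists). *)
Definition cover_num (X : set M) (rho : R) : nat :=
  match pselect (exists k, ball_cover X rho k) with
  | left ex => ex_minn (P := fun k => `[< ball_cover X rho k >])
                 (let: ex_intro k hk := ex in ex_intro _ k (asboolT hk))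
  | right _ => 0%N
  end.

Definition word_comp {s : nat} (g : 'I_s -> M -> M) (w : seq 'I_s) : M -> M :=
  foldr (fun i f => g i \o f) id w.

Definition stage {s : nat} (g : 'I_s -> M -> M) (N : set M) (n : nat) : set M :=
  \bigcup_(w in [set w : n.-tuple 'I_s | True]) (word_comp g w @` N).

Definition limit_set {s : nat} (g : 'I_s -> M -> M) (N : set M) : set M :=
  \bigcap_(n in [set n : nat | (0 < n)%N]) stage g N n.

End Defs.

(** The stages Λ_n are compact (finite unions of continuous images of N) and
    decrease to Λ.  Fix a minimal covering of Λ by ρ-balls; its union V is an
    open neighbourhood of Λ, so by compactness (V and the complements of the
    closed Λ_n cover Λ_0 = N) some Λ_n, hence every later stage, lies in V.
    From then on Λ_n needs no more balls than Λ, while Λ ⊆ Λ_n always needs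
    no fewer. *)
From HB Require Import structures.
From mathcomp Require Import all_boot all_order all_algebra.
From mathcomp Require Import all_classical all_reals all_analysis.
From mathcomp Require Import lra.
Import Order.TTheory GRing.Theory Num.Theory.
Local Open Scope classical_set_scope.
Local Open Scope ring_scope.

(* [compact_cover] is stated for pointed spaces only; a point of the compact
   set, when there is one, makes its ambient space pointed. *)
Definition pointed_at {T : topologicalType} (x : T) : Type := T.
HB.instance Definition _ (T : topologicalType) (x : T) :=
  Topological.on (pointed_at x).
HB.instance Definition _ (T : topologicalType) (x : T) :=
  isPointed.Build (pointed_at x) x.

Lemma compact_cover_compact {T : topologicalType} {A : set T} :
  compact A -> cover_compact A.
Proof.
have [[x _] cA|A0 _] := pselect (A !=set0).
  by have : @compact (pointed_at x) A by []; rewrite compact_cover.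
by move=> I D f _ _; exists finmap.fset0 => // y Ay; case: A0; exists y.
Qed.

Lemma compact_nonincreasing_near_subset (T : topologicalType)
    (K V : set T) (C : nat -> set T) :
  compact K -> open V -> (forall n, closed (C n)) ->
  {homo C : n m / (n <= m)%N >-> m `<=` n} ->
  K `&` \bigcap_n C n `<=` V -> \forall n \near \oo, K `&` C n `<=` V.
Proof.
move=> cK oV cC decC KCV.
have [D _ KD] : finite_subset_cover [set: nat] (fun n => V `|` ~` C n) K.
  apply: (compact_cover_compact cK) => [n _|x Kx].
    by apply: openU => //; exact: closed_openC.
  have [Vx|nVx] := pselect (V x); first by exists 0%N => //; left.
  have [n nCnx] : exists n, ~ C n x.
    by apply/existsNP => Cx; apply: nVx; apply: KCV; split => // n _; exact: Cx.
  by exists n => //; right.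
exists (\max_(n <- finmap.enum_fset D) n) => // m /= Dm x [Kx Cmx].
have [n Dn [//|nCnx]] := KD x Kx; case: nCnx; apply: decC Cmx.
by apply: leq_trans Dm; exact: (leq_bigmax_seq _ Dn).
Qed.

Section covering_number.
Context {R : realType} {M : metricType R}.
Implicit Types (X Y : set M) (rho : R).

Lemma metric_ball_open (x : M) (r : R) : open (ball x r).
Proof.
rewrite openE => y; rewrite /= ballEmdist /= => xy.
have e0 : 0 < (r - mdist x y) / 2 by rewrite divr_gt0 // subr_gt0.
apply: filterS (nbhsx_ballx y _ e0) => z yz.
have xy' : ball x ((r + mdist x y) / 2) y by rewrite ballEmdist /=; lra.
by have := ball_triangle xy' yz; rewrite ballEmdist /=; lra.
Qed.

Lemma ball_cover_subset {X Y rho k} :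
  X `<=` Y -> ball_cover Y rho k -> ball_cover X rho k.
Proof. by move=> XY [c [size_c Yc]]; exists c; split => // x /XY /Yc. Qed.

Lemma compact_ball_cover {X rho} : 0 < rho -> compact X ->
  exists k, ball_cover X rho k.
Proof.
move=> rho0 cX.
have [D _ XD] : finite_subset_cover [set: M] (fun x => ball x rho) X.
  apply: (compact_cover_compact cX) => [x _|x Xx]; first exact: metric_ball_open.
  by exists x => //; exact: ballxx.
by exists (size (finmap.enum_fset D)), (finmap.enum_fset D).
Qed.

Lemma ball_cover_cover_num {X rho} :
  (exists k, ball_cover X rho k) -> ball_cover X rho (cover_num X rho).
Proof.
rewrite /cover_num => ex; case: pselect => [ex'|[]] //.
by case: ex_minnP => m /asboolP.
Qed.

Lemma cover_num_min {X rho k} : ball_cover X rho k -> (cover_num X rho <= k)%N.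
Proof.
rewrite /cover_num => Xk; case: pselect => [ex|[]]; last by exists k.
by case: ex_minnP => m _; apply; exact/asboolP.
Qed.

Lemma le_cover_num {X Y rho} : X `<=` Y -> (exists k, ball_cover Y rho k) ->
  (cover_num X rho <= cover_num Y rho)%N.
Proof.
move=> XY /ball_cover_cover_num Ycov.
by apply: cover_num_min; exact: ball_cover_subset Ycov.
Qed.

Lemma cover_num_bigcap_near {K : nat -> set M} {rho} : 0 < rho ->
  (forall n, compact (K n)) -> {homo K : n m / (n <= m)%N >-> m `<=` n} ->
  \forall n \near \oo, cover_num (\bigcap_n K n) rho = cover_num (K n) rho.
Proof.
move=> rho0 cK decK; set L := \bigcap_n K n.
have [k0 K0k0] := compact_ball_cover rho0 (cK 0%N).
have [c [size_c Lc]] : ball_cover L rho (cover_num L rho).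
  by apply: ball_cover_cover_num; exists k0; apply: ball_cover_subset K0k0 => x; apply.
have [n0 _ Kc] : \forall n \near \oo,
    K 0%N `&` K n `<=` \bigcup_(x in [set x | x \in c]) ball x rho.
  apply: compact_nonincreasing_near_subset (cK 0%N) _ _ decK _ => [|n|x [_ /Lc]//].
  - by apply: bigcup_open => x _; exact: metric_ball_open.
  - by apply: compact_closed (cK n); exact: metric_hausdorff.
exists n0 => // n /= n0n; apply/eqP; rewrite eqn_leq.
rewrite le_cover_num /=; [|by move=> x; apply|exact: compact_ball_cover].
rewrite -size_c; apply: cover_num_min; exists c; split => // x Knx.
by apply: (Kc n n0n); split => //; exact: decK Knx.
Qed.

End covering_number.

Section stages.
Context {R : realType} {M : metricType R}.
Context {s : nat} {g : 'I_s -> M -> M} {N : set M}.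
Hypothesis gN : forall i, g i @` N `<=` N.

Lemma word_comp_cat (u v : seq 'I_s) x :
  word_comp g (u ++ v) x = word_comp g u (word_comp g v x).
Proof. by elim: u => //= i u IH; rewrite /word_comp /= -!/(word_comp g _) IH. Qed.

Lemma word_comp_sub (w : seq 'I_s) : word_comp g w @` N `<=` N.
Proof.
elim: w => [|i w IH] _ [x Nx <-] //=; rewrite /word_comp /= -/(word_comp g _).
by apply: (gN i); exists (word_comp g w x) => //; apply: IH; exists x.
Qed.

Lemma stage_nonincreasing : {homo stage g N : n m / (n <= m)%N >-> m `<=` n}.
Proof.
move=> n m nm _ [w _ [x Nx <-]].
have size_w : size (take n w) == n by rewrite size_takel // size_tuple.
exists (Tuple size_w) => //; exists (word_comp g (drop n w) x).
  by apply: word_comp_sub; exists x.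
by rewrite /= -word_comp_cat cat_take_drop.
Qed.

Lemma limit_setE : limit_set g N = \bigcap_n stage g N n.
Proof.
apply/seteqP; split => x Lx n _; last exact: Lx.
by apply: stage_nonincreasing (leqnSn n) _ _; exact: Lx.
Qed.

Hypotheses (cN : compact N) (gcont : forall i, {within N, continuous g i}).

Lemma compact_word_comp_image (w : seq 'I_s) : compact (word_comp g w @` N).
Proof.
elim: w => [|i w IH]; first by rewrite /word_comp /= image_id.
rewrite /word_comp /= -/(word_comp g _) -image_comp.
by apply: continuous_compact => //; exact: continuous_subspaceW (word_comp_sub w) (gcont i).
Qed.

Lemma compact_stage n : compact (stage g N n).
Proof.
have -> : stage g N n =
    \big[setU/set0]_(w <- enum {: n.-tuple 'I_s}) (word_comp g w @` N).
  by rewrite -bigcup_seq; apply: eq_bigcupl; split => w //= _; rewrite mem_enum.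
by apply: bigsetU_compact => w _; exact: compact_word_comp_image.
Qed.

End stages.

Theorem lemma5 (R : realType) (M : metricType R) (N U : set M) (s : nat)
    (g : 'I_s -> M -> M)
    (hNc : compact N) (hNint : N° !=set0)
    (hUo : open U) (hNU : N `<=` U)
    (hgcont : forall i, {within U, continuous g i})
    (hginj : forall i, {in U &, injective (g i)})
    (hgint : forall i, g i @` U `<=` N°)
    (hgdisj : forall i j, i != j -> g i @` U `&` g j @` U = set0)
    (hgbd : forall i, (closure (g i @` N) `\` (g i @` N)°) `&` (closure N `\` N°) = set0)
    (rho : R) (hrho : 0 < rho) :
  (forall n : nat, (0 < n)%N -> (cover_num (limit_set g N) rho <= cover_num (stage g N n) rho)%N)
  /\ (exists n : nat, (0 < n)%N /\ cover_num (limit_set g N) rho = cover_num (stage g N n) rho)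
  /\ (exists N1 : nat, (0 < N1)%N /\ forall n : nat, (N1 < n)%N ->
        cover_num (limit_set g N) rho = cover_num (stage g N n) rho).
Proof.
have gN i : g i @` N `<=` N.
  by move=> _ [x Nx <-]; apply: interior_subset; apply: (hgint i); exists x => //; exact: hNU.
have gNcont i : {within N, continuous g i} := continuous_subspaceW hNU (hgcont i).
have cstage n : compact (stage g N n) := compact_stage gN hNc gNcont n.
have [N0 _ eqN0] := cover_num_bigcap_near hrho cstage (stage_nonincreasing gN).
have late n : (N0 < n)%N ->
    cover_num (limit_set g N) rho = cover_num (stage g N n) rho.
  by rewrite (limit_setE gN) => /ltnW; exact: eqN0.
split; [|split].
- move=> n _; rewrite (limit_setE gN).
  by apply: le_cover_num; [move=> x; apply|exact: compact_ball_cover].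
- by exists N0.+1; split => //; apply: late.
- by exists N0.+1; split => // n /ltnW; exact: late.
Qed.
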